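(* Let $A=\{A_i\}_{i=1}^\mathsf{p}\subset\mathcal{B}(\mathbb{C}^D)$ be the tensor of an injective MPS in canonical form, with transfer matrix $E=\sum_i\overline{A_i}\otimes A_i=|I\rangle\rangle\langle\langle\Lambda|+\tilde E$. Let $X,Y\in \mathcal{B}(\mathbb{C}^D)$ be such that the states $|\Psi_X\rangle=|\Psi(A,X,n)\rangle$ and $|\Psi_Y\rangle=|\Psi(A,Y,n)\rangle$ are normalized and orthogonal, and assume $n$ is sufficiently large compared to $D$. Then (i) $\|X\|_F=O(1)$ (and likewise $\|Y\|_F=O(1)$); (ii) $|\langle\langle\Lambda|(\overline{X}\otimes Y)|I\rangle\rangle|= O(\lambda_2^{n/2})$ and $|\langle\langle\Lambda|(\overline{Y}\otimes X)|I\rangle\rangle|= O(\lambda_2^{n/2})$, where the $O$-notation refers to $n\to\infty$.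
   Context: MPS: $|\Psi(A,X,n)\rangle=\sum_{i_1,\dots,i_n}\mathrm{tr}(A_{i_1}\cdots A_{i_n}X)|i_1\cdots i_n\rangle$. Vectorization: for $X=\sum_{\alpha,\beta}X_{\alpha\beta}|\alpha\rangle\langle\beta|$ set $|X\rangle\rangle=\sum_{\alpha,\beta}X_{\alpha\beta}|\beta\rangle\otimes|\alpha\rangle\in\mathbb{C}^D\otimes\mathbb{C}^D$, so $E|X\rangle\rangle=|\mathcal{E}(X)\rangle\rangle$ with $\mathcal{E}(X)=\sum_iA_iXA_i^\dagger$. Injective: $\mathcal{E}$ has spectral radius $1$ and is primitive (its fixed point is positive definite and $1$ is its only eigenvalue on the unit circle, with multiplicity one). Canonical form: the unique fixed point of $\mathcal{E}$ is the identity $I$, and the unique fixed point of $\mathcal{E}^\dagger(Y)=\sum_iA_i^\dagger YA_i$ is a positive definite diagonal matrix $\Lambda$ with $\mathrm{tr}\Lambda=1$; then $E=|I\rangle\rangle\langle\langle\Lambda|\oplus\tilde E$ is the Jordan decomposition, with $\tilde E$ collecting the Jordan blocks of eigenvalues of modulus $<1$. $\lambda_2<1$ denotes the largest modulus of an eigenvalue of $E$ other than the eigenvalue $1$. *)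

From HB Require Import structures.
From mathcomp Require Import all_boot all_order all_algebra all_field.
Set Implicit Arguments. Unset Strict Implicit. Unset Printing Implicit Defensive.
Import Order.TTheory GRing.Theory Num.Theory.
Local Open Scope ring_scope.

Section MPS.
Variables (p D : nat).

(* Index (k : 'I_(D*D)) of C^D ⊗ C^D decoded as a pair (first factor, second factor);
   the basis vector |b> ⊗ |a> has index mxvec_index b a. *)
Definition idx2 (k : 'I_(D * D)) : 'I_D * 'I_D :=
  enum_val (cast_ord (esym (mxvec_cast D D)) k).

Definition kron (M N : 'M[algC]_D) : 'M[algC]_(D * D) :=
  \matrix_(k, l) (M (idx2 k).1 (idx2 l).1 * N (idx2 k).2 (idx2 l).2).

Definition conjm m n (M : 'M[algC]_(m, n)) : 'M[algC]_(m, n) := map_mx Num.conj M.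
Definition adjm m n (M : 'M[algC]_(m, n)) : 'M[algC]_(n, m) := (conjm M)^T.

(* Vectorization |X>> = sum_{a,b} X_{ab} |b> ⊗ |a>. *)
Definition vecm (X : 'M[algC]_D) : 'cV[algC]_(D * D) :=
  \col_k X (idx2 k).2 (idx2 k).1.

Definition braket (u v : 'cV[algC]_(D * D)) : algC :=
  \sum_k (u k 0)^* * v k 0.

Definition transfer (A : 'I_p -> 'M[algC]_D) : 'M[algC]_(D * D) :=
  \sum_i kron (conjm (A i)) (A i).

Definition channel (A : 'I_p -> 'M[algC]_D) (X : 'M[algC]_D) : 'M[algC]_D :=
  \sum_i (A i *m X *m adjm (A i)).
Definition channel_adj (A : 'I_p -> 'M[algC]_D) (Y : 'M[algC]_D) : 'M[algC]_D :=
  \sum_i (adjm (A i) *m Y *m A i).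

(* Coefficient tr(A_{s 0} ... A_{s (n-1)} X) of |Psi(A,X,n)> on |s 0 ... s (n-1)>. *)
Definition mps_coef (A : 'I_p -> 'M[algC]_D) (X : 'M[algC]_D) (n : nat)
    (s : {ffun 'I_n -> 'I_p}) : algC :=
  \tr (foldr (fun k M => A (s k) *m M) X (enum 'I_n)).

Definition mps_inner (A : 'I_p -> 'M[algC]_D) (X Y : 'M[algC]_D) (n : nat) : algC :=
  \sum_(s : {ffun 'I_n -> 'I_p}) (mps_coef A X s)^* * mps_coef A Y s.

Definition frob (X : 'M[algC]_D) : algC :=
  sqrtC (\sum_i \sum_j `|X i j| ^+ 2).

(* Injective MPS (spectral radius 1, primitive) in canonical form with
   left fixed point Lam. *)
Definition injective_canonical (A : 'I_p -> 'M[algC]_D) (Lam : 'M[algC]_D) : Prop :=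
  let E := transfer A in
  [/\
      eigenvalue E 1 /\ (forall mu, eigenvalue E mu -> `|mu| <= 1),
      (forall mu, eigenvalue E mu -> `|mu| = 1 -> mu = 1) /\ mup 1 (char_poly E) = 1%N,
      channel A 1%:M = 1%:M /\ (forall X, channel A X = X -> exists c, X = c%:M),
      channel_adj A Lam = Lam /\ (forall Y, channel_adj A Y = Y -> exists c, Y = c *: Lam)
    &
      [/\ is_diag_mx Lam, forall i, 0 < Lam i i & \tr Lam = 1]].

Definition is_lambda2 (A : 'I_p -> 'M[algC]_D) (lam2 : algC) : Prop :=
  (exists2 mu, eigenvalue (transfer A) mu & mu != 1 /\ `|mu| = lam2) /\
  (forall mu, eigenvalue (transfer A) mu -> mu != 1 -> `|mu| <= lam2).

End MPS.

(* The transfer matrix splits as $E = |I\rangle\rangle\langle\langle\Lambda| + \tilde E$,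
   the rank-one projector annihilating $\tilde E$ on both sides, so that
   $E^{n} = |I\rangle\rangle\langle\langle\Lambda| + \tilde E^{n}$.  Every eigenvalue of
   $\tilde E$ has modulus at most $\lambda_2$, because an eigenvector for the eigenvalue 1
   would be the fixed point $\Lambda$; a Schur triangularization of $\tilde E$, rescaled by a
   diagonal similarity, then bounds the entries of $\tilde E^{n}$ by $K \sqrt{\lambda_2}^{\,n}$
   (they vanish for large $n$ when $\lambda_2 = 0$).  Since
   $\langle\Psi_X|\Psi_Y\rangle = \mathrm{tr}(E^{n}(\overline X \otimes Y))$, the overlap equals
   $\langle\langle\Lambda|(\overline X \otimes Y)|I\rangle\rangle$ up to an error
   $O(\sqrt{\lambda_2}^{\,n} \|X\|_F \|Y\|_F)$.  For normalized $X$ the main term is at least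
   $\min_a \Lambda_{aa} \|X\|_F^2$, which bounds $\|X\|_F$ once the error is small; for
   orthogonal $X$ and $Y$ the main term is minus the error. *)

From HB Require Import structures.
From mathcomp Require Import all_boot all_order all_algebra all_field.
From mathcomp Require Import ring zify.
Import Order.TTheory GRing.Theory Num.Theory.
Local Open Scope ring_scope.
Set Implicit Arguments. Unset Strict Implicit. Unset Printing Implicit Defensive.

Section Kronecker.
Variable D : nat.
Implicit Types (X Y Z M N : 'M[algC]_D).

Lemma idx2_mxvec (i j : 'I_D) : idx2 (mxvec_index i j) = (i, j).
Proof. by rewrite /idx2 /mxvec_index cast_ordK enum_rankK. Qed.

Lemma big_mxvec_index (V : nmodType) (F : 'I_(D * D) -> V) :
  \sum_k F k = \sum_i \sum_j F (mxvec_index i j).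
Proof.
rewrite pair_big (reindex (fun ij : 'I_D * 'I_D => mxvec_index ij.1 ij.2)) //=.
exists (@idx2 D) => [[i j] _ | k _] /=; first by rewrite idx2_mxvec.
by case/mxvec_indexP: k => i j; rewrite idx2_mxvec.
Qed.

Lemma kronE M N a b c d :
  kron M N (mxvec_index a b) (mxvec_index c d) = M a c * N b d.
Proof. by rewrite /kron mxE !idx2_mxvec. Qed.

Lemma vecmE X a b : vecm X (mxvec_index a b) 0 = X b a.
Proof. by rewrite /vecm mxE idx2_mxvec. Qed.

Lemma mul_kron M N M' N' : kron M N *m kron M' N' = kron (M *m M') (N *m N').
Proof.
apply/matrixP => k l; case/mxvec_indexP: k => a b; case/mxvec_indexP: l => c d.
rewrite kronE !mxE big_mxvec_index big_distrlr /=.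
by apply: eq_bigr => i _; apply: eq_bigr => j _; rewrite !kronE mulrACA.
Qed.

Lemma kron1 : kron (1%:M : 'M_D) 1%:M = 1%:M.
Proof.
apply/matrixP => k l; case/mxvec_indexP: k => a b; case/mxvec_indexP: l => c d.
rewrite kronE !mxE /mxvec_index (inj_eq (@cast_ord_inj _ _ _)) (inj_eq enum_rank_inj).
by rewrite xpair_eqE; case: (a == c); case: (b == d); rewrite ?mulr0 ?mulr1.
Qed.

Lemma mxtrace_kron M N : \tr (kron M N) = \tr M * \tr N.
Proof.
rewrite /mxtrace big_mxvec_index big_distrlr /=.
by apply: eq_bigr => i _; apply: eq_bigr => j _; rewrite kronE.
Qed.

Lemma mul_kron_vecm M N Z : kron M N *m vecm Z = vecm (N *m Z *m M^T).
Proof.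
apply/matrixP => k l; rewrite (ord1 l); case/mxvec_indexP: k => a b.
rewrite vecmE !mxE big_mxvec_index /=.
apply: eq_bigr => i _; rewrite !mxE big_distrl /=; apply: eq_bigr => j _.
by rewrite kronE vecmE; ring.
Qed.

Lemma vecm_sum (I : Type) (r : seq I) (P : pred I) (F : I -> 'M[algC]_D) :
  vecm (\sum_(i <- r | P i) F i) = \sum_(i <- r | P i) vecm (F i).
Proof.
by apply/matrixP => k l; rewrite !mxE !summxE; apply: eq_bigr => i _; rewrite mxE.
Qed.

Lemma vecmZ c X : vecm (c *: X) = c *: vecm X.
Proof. by apply/matrixP => k l; rewrite !mxE. Qed.

Lemma vecm_inj : injective (@vecm D).
Proof. by move=> X Y eqXY; apply/matrixP => a b; rewrite -!vecmE eqXY. Qed.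

Lemma conjmM M N : conjm (M *m N) = conjm M *m conjm N.
Proof. exact: map_mxM. Qed.

Lemma conjm1 : conjm (1%:M : 'M_D) = 1%:M.
Proof. exact: map_mx1. Qed.

Lemma conjmK M : conjm (conjm M) = M.
Proof. by apply/matrixP => i j; rewrite !mxE conjCK. Qed.

Lemma mxtrace_conjm M : \tr (conjm M) = (\tr M)^*.
Proof. by rewrite /mxtrace rmorph_sum; apply: eq_bigr => i _; rewrite mxE. Qed.

Lemma adjm_kron M N : adjm (kron M N) = kron (adjm M) (adjm N).
Proof.
apply/matrixP => k l; case/mxvec_indexP: k => a b; case/mxvec_indexP: l => c d.
by rewrite !mxE !idx2_mxvec /= rmorphM.
Qed.

End Kronecker.

Section Adjoint.
Implicit Types m n q : nat.

Lemma adjm_sum m n (I : Type) (r : seq I) (P : pred I) (F : I -> 'M[algC]_(m, n)) :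
  adjm (\sum_(i <- r | P i) F i) = \sum_(i <- r | P i) adjm (F i).
Proof.
apply/matrixP => k l; rewrite !mxE !summxE rmorph_sum.
by apply: eq_bigr => i _; rewrite !mxE.
Qed.

Lemma adjmZ m n c (U : 'M[algC]_(m, n)) : adjm (c *: U) = c^* *: adjm U.
Proof. by apply/matrixP => k l; rewrite !mxE rmorphM. Qed.

Lemma adjmM m n q (U : 'M[algC]_(m, n)) (V : 'M[algC]_(n, q)) :
  adjm (U *m V) = adjm V *m adjm U.
Proof. by rewrite /adjm /conjm map_mxM trmx_mul. Qed.

Lemma adjmK m n (U : 'M[algC]_(m, n)) : adjm (adjm U) = U.
Proof. by apply/matrixP => i j; rewrite !mxE conjCK. Qed.

End Adjoint.

Section TransferMatrix.
Variables (p D : nat) (A : 'I_p -> 'M[algC]_D).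
Implicit Types (X Y : 'M[algC]_D).

Lemma transfer_vecm X : transfer A *m vecm X = vecm (channel A X).
Proof.
rewrite /transfer mulmx_suml /channel vecm_sum.
by apply: eq_bigr => i _; rewrite mul_kron_vecm.
Qed.

Lemma adjm_vecm_transfer Y :
  adjm (vecm Y) *m transfer A = adjm (vecm (channel_adj A Y)).
Proof.
rewrite -[LHS]adjmK adjmM adjmK /transfer adjm_sum mulmx_suml.
rewrite /channel_adj vecm_sum; congr adjm; apply: eq_bigr => i _.
by rewrite adjm_kron mul_kron_vecm /adjm trmxK conjmK.
Qed.

Lemma big_kron (I : Type) (r : seq I) (P : pred I) (M N : I -> 'M[algC]_D) :
  \prod_(i <- r | P i) kron (M i) (N i) =
  kron (\prod_(i <- r | P i) M i) (\prod_(i <- r | P i) N i).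
Proof.
elim: r => [|i r IHr]; first by rewrite !big_nil kron1.
by rewrite !big_cons; case: (P i) => //; rewrite IHr -!mulmxE mul_kron.
Qed.

Lemma big_conjm (I : Type) (r : seq I) (P : pred I) (M : I -> 'M[algC]_D) :
  \prod_(i <- r | P i) conjm (M i) = conjm (\prod_(i <- r | P i) M i).
Proof.
elim: r => [|i r IHr]; first by rewrite !big_nil conjm1.
by rewrite !big_cons; case: (P i) => //; rewrite IHr -!mulmxE conjmM.
Qed.

Lemma transfer_exp n : transfer A ^+ n =
  \sum_(s : {ffun 'I_n -> 'I_p})
     kron (conjm (\prod_(k < n) A (s k))) (\prod_(k < n) A (s k)).
Proof.
rewrite -[n in LHS]card_ord -prodr_const /transfer.
rewrite (bigA_distr_bigA (fun (_ : 'I_n) (j : 'I_p) => kron (conjm (A j)) (A j))).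
by apply: eq_bigr => s _; rewrite big_kron big_conjm.
Qed.

Lemma mps_coefE X n (s : {ffun 'I_n -> 'I_p}) :
  mps_coef A X s = \tr ((\prod_(k < n) A (s k)) *m X).
Proof.
have -> : \prod_(k < n) A (s k) = \prod_(k <- enum 'I_n) A (s k).
  by rewrite enumT [index_enum _]unlock.
rewrite /mps_coef; congr mxtrace.
elim: (enum 'I_n) => [|k ks IHks] /=; first by rewrite big_nil mul1mx.
by rewrite big_cons IHks -mulmxE mulmxA.
Qed.

Lemma mps_inner_transfer X Y n :
  mps_inner A X Y n = \tr (transfer A ^+ n *m kron (conjm X) Y).
Proof.
rewrite transfer_exp mulmx_suml raddf_sum; apply: eq_bigr => s _.
by rewrite !mps_coefE mul_kron /= mxtrace_kron -conjmM mxtrace_conjm.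
Qed.

Lemma mps_inner_conj X Y n : mps_inner A Y X n = (mps_inner A X Y n)^*.
Proof.
rewrite /mps_inner rmorph_sum; apply: eq_bigr => s _.
by rewrite rmorphM /= conjCK mulrC.
Qed.

End TransferMatrix.

Section Braket.
Variable D : nat.

Lemma braket_vecm (Y Z : 'M[algC]_D) : braket (vecm Y) (vecm Z) = \tr (adjm Y *m Z).
Proof.
rewrite /braket big_mxvec_index; apply: eq_bigr => a _; rewrite mxE.
by apply: eq_bigr => b _; rewrite !vecmE !mxE.
Qed.

Lemma adjm_mul_braket (u v : 'cV[algC]_(D * D)) : adjm u *m v = (braket u v)%:M.
Proof.
rewrite [LHS]mx11_scalar !mxE /braket.
by congr _%:M; apply: eq_bigr => k _; rewrite !mxE.
Qed.

Lemma mxtrace_rank1 (u v : 'cV[algC]_(D * D)) K :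
  \tr (u *m adjm v *m K) = braket v (K *m u).
Proof.
by rewrite -mulmxA mxtrace_mulC -mulmxA adjm_mul_braket trace_mx11 mxE eqxx mulr1n.
Qed.

End Braket.

Section EntrywiseNorm.
Variable R : numDomainType.

Definition mx_l1 m n (B : 'M[R]_(m, n)) : R := \sum_i \sum_j `|B i j|.

Lemma mx_l1_ge0 m n (B : 'M[R]_(m, n)) : 0 <= mx_l1 B.
Proof. by apply: sumr_ge0 => i _; apply: sumr_ge0. Qed.

Lemma row_sum_le_mx_l1 m n (B : 'M[R]_(m, n)) i : \sum_j `|B i j| <= mx_l1 B.
Proof.
rewrite /mx_l1 [X in _ <= X](bigD1 i) //= lerDl.
by apply: sumr_ge0 => k _; apply: sumr_ge0.
Qed.

Lemma col_sum_le_mx_l1 m n (B : 'M[R]_(m, n)) j : \sum_i `|B i j| <= mx_l1 B.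
Proof.
rewrite /mx_l1 exchange_big [X in _ <= X](bigD1 j) //= lerDl.
by apply: sumr_ge0 => k _; apply: sumr_ge0.
Qed.

Lemma norm_mulmx3_le m n q r (L : 'M[R]_(m, n)) (B : 'M[R]_(n, q))
    (N : 'M[R]_(q, r)) (c : R) :
  0 <= c -> (forall k l, `|B k l| <= c) ->
  forall i j, `|(L *m B *m N) i j| <= c * mx_l1 L * mx_l1 N.
Proof.
move=> c_ge0 Bc i j.
have LB l : `|(L *m B) i l| <= c * \sum_k `|L i k|.
  rewrite mxE mulr_sumr; apply: le_trans (ler_norm_sum _ _ _) _.
  by apply: ler_sum => k _; rewrite normrM mulrC; apply: ler_wpM2r.
rewrite mxE; apply: le_trans (ler_norm_sum _ _ _) _.
apply: le_trans (_ : \sum_l (c * \sum_k `|L i k|) * `|N l j| <= _).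
  by apply: ler_sum => l _; rewrite normrM; apply: ler_wpM2r.
rewrite -mulr_sumr ler_pM ?mulr_ge0 ?sumr_ge0 ?col_sum_le_mx_l1 //.
by apply: ler_wpM2l; rewrite ?row_sum_le_mx_l1.
Qed.

Lemma norm_mxtrace_mul_le m (M N : 'M[R]_m) (c e : R) :
  0 <= c -> 0 <= e -> (forall i j, `|M i j| <= c) -> (forall i j, `|N i j| <= e) ->
  `|\tr (M *m N)| <= (c * e) *+ (m * m).
Proof.
move=> c_ge0 e_ge0 Mc Ne; rewrite mulrnA -[m in _ *+ m]card_ord -sumr_const.
apply: le_trans (ler_norm_sum _ _ _) _; apply: ler_sum => i _.
rewrite mxE -[m in _ *+ m]card_ord -sumr_const.
apply: le_trans (ler_norm_sum _ _ _) _; apply: ler_sum => j _.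
by rewrite normrM ler_pM.
Qed.

End EntrywiseNorm.

Section TriangularPowers.
Variables (R : numFieldType) (d : nat) (T : 'M[R]_d).
Hypothesis T_trig : is_trig_mx T.

Lemma trig_exp_eq0 : (forall i, T i i = 0) -> T ^+ d = 0.
Proof.
move=> T_diag0.
suff vanish k (i j : 'I_d) : (i < j + k)%N -> (T ^+ k) i j = 0.
  by apply/matrixP => i j; rewrite mxE vanish // ltn_addl.
elim: k i j => [|k IHk] i j lt_ijk.
  by rewrite expr0 mxE; case: eqP => // eq_ij; rewrite eq_ij addn0 ltnn in lt_ijk.
rewrite exprSr -mulmxE mxE big1 // => l _.
case: (ltngtP l j) => [lt_lj | lt_jl | /val_inj eq_lj].
- by rewrite (is_trig_mxP T_trig l j lt_lj) mulr0.
- by rewrite IHk ?mul0r //; lia.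
- by rewrite eq_lj T_diag0 mulr0.
Qed.

Variables (r delta : R).
Hypotheses (r_ge0 : 0 <= r) (T_diag : forall i, `|T i i| <= r).
Hypotheses (delta_gt0 : 0 < delta) (delta_le1 : delta <= 1).

(* Weighting column [j] by [delta ^+ (d - j)] is conjugation by a diagonal
   matrix: it keeps the diagonal of the lower triangular [T] and shrinks
   its off-diagonal part by a factor [delta]. *)
Let w (j : 'I_d) := delta ^+ (d - j).
Let rho := r + delta * mx_l1 T.

Let w_ge0 j : 0 <= w j.
Proof. by rewrite exprn_ge0 // ltW. Qed.

Let rho_ge0 : 0 <= rho.
Proof. by rewrite addr_ge0 // mulr_ge0 ?mx_l1_ge0 // ltW. Qed.

Lemma trig_weighted_row i : \sum_l `|T i l| * w l <= rho * w i.
Proof.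
rewrite (bigD1 i) //= /rho mulrDl; apply: lerD; first exact: ler_wpM2r.
apply: le_trans (_ : \sum_(l | l != i) delta * w i * `|T i l| <= _).
  apply: ler_sum => l ne_li; rewrite [X in _ <= X]mulrC.
  case: (ltngtP l i) => [lt_li | lt_il | /val_inj eq_li].
  - apply: ler_wpM2l => //; rewrite /w -exprS.
    by apply: ler_wiXn2l; [exact: ltW | exact: delta_le1 | have := ltn_ord i; lia].
  - by rewrite (is_trig_mxP T_trig i l lt_il) normr0 !mul0r.
  - by rewrite eq_li eqxx in ne_li.
rewrite -mulr_sumr mulrAC; apply: ler_wpM2r => //; apply: ler_wpM2l; first exact: ltW.
apply: le_trans (row_sum_le_mx_l1 T i).
by rewrite [X in _ <= X](bigD1 i) //= lerDr.
Qed.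

Lemma trig_weighted_exp_row n i :
  \sum_j `|(T ^+ n) i j| * w j <= rho ^+ n * w i.
Proof.
elim: n i => [|n IHn] i.
  rewrite expr0 mul1r (bigD1 i) //= big1 => [|j ne_ji]; last first.
    by rewrite mxE eq_sym (negbTE ne_ji) normr0 mul0r.
  by rewrite mxE eqxx normr1 mul1r addr0.
rewrite exprS -mulmxE.
apply: le_trans (_ : \sum_j \sum_l `|T i l| * (`|(T ^+ n) l j| * w j) <= _).
  apply: ler_sum => j _; under [X in _ <= X]eq_bigr do rewrite mulrA.
  rewrite -mulr_suml; apply: ler_wpM2r => //; rewrite mxE.
  by apply: le_trans (ler_norm_sum _ _ _) _; apply: ler_sum => l _; rewrite normrM.
rewrite exchange_big /=.
apply: le_trans (_ : \sum_l `|T i l| * (rho ^+ n * w l) <= _).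
  by apply: ler_sum => l _; rewrite -mulr_sumr; apply: ler_wpM2l.
under eq_bigr do rewrite mulrCA.
rewrite -mulr_sumr exprSr -mulrA; apply: ler_wpM2l; first exact: exprn_ge0.
exact: trig_weighted_row.
Qed.

Lemma trig_exp_bound n i j :
  `|(T ^+ n) i j| <= (r + delta * mx_l1 T) ^+ n / delta ^+ d.
Proof.
rewrite ler_pdivlMr ?exprn_gt0 //.
apply: le_trans (_ : `|(T ^+ n) i j| * w j <= _).
  by apply: ler_wpM2l => //; apply: ler_wiXn2l; rewrite ?leq_subr // ltW.
apply: le_trans (_ : \sum_j `|(T ^+ n) i j| * w j <= _).
  by rewrite (bigD1 j) //= lerDl sumr_ge0 // => k _; rewrite mulr_ge0.
apply: le_trans (trig_weighted_exp_row n i) _.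
by apply: ler_piMr; rewrite ?exprn_ge0 // exprn_ile1 // ltW.
Qed.

End TriangularPowers.

Section SpectralBound.
Variable C : numClosedFieldType.

Lemma mx_trigonalize m (M : 'M[C]_m) : exists P T,
  [/\ P \in unitmx, is_trig_mx T, M = invmx P *m T *m P
    & forall i, eigenvalue M (T i i)].
Proof.
case: m M => [|m] M.
  exists 1%:M, M; split; rewrite ?unitmx1 ?invmx1 ?mulmx1 ?mul1mx //; last by case.
  by apply/is_trig_mxP => -[].
have [P /unitarymx_unit P_unit M_trig] := Schur M (ltn0Sn m).
exists P, (conjmx P M); split => //.
  by rewrite conjumx // !mulmxA mulVmx // mul1mx mulmxKV.
move=> i; apply: (eigenvalue_conjmx (stablemx_unit M P_unit)); first by rewrite row_free_unit.
rewrite [_ \in _]eigenvalue_root_char char_poly_trig // rootE horner_prod.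
by rewrite (bigD1 i) //= hornerXsubC subrr mul0r.
Qed.

Lemma exp_conj_invmx m (P T : 'M[C]_m) n : P \in unitmx ->
  (invmx P *m T *m P) ^+ n = invmx P *m T ^+ n *m P.
Proof.
move=> P_unit; elim: n => [|n IHn]; first by rewrite !expr0 mulmx1 mulVmx.
by rewrite !exprSr -!mulmxE IHn !mulmxA mulmxK.
Qed.

Lemma mx_exp_eq0 m (M : 'M[C]_m) :
  (forall a, eigenvalue M a -> a = 0) -> M ^+ m = 0.
Proof.
move=> eig0; have [P [T [P_unit T_trig M_eq T_eig]]] := mx_trigonalize M.
have T_diag0 i : T i i = 0 := eig0 _ (T_eig i).
by rewrite M_eq exp_conj_invmx // (trig_exp_eq0 T_trig T_diag0) mulmx0 mul0mx.
Qed.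

Lemma mx_exp_bound m (M : 'M[C]_m) (r s : C) : 0 <= r -> r < s ->
  (forall a, eigenvalue M a -> `|a| <= r) ->
  exists2 K, 0 <= K & forall n i j, `|(M ^+ n) i j| <= K * s ^+ n.
Proof.
move=> r_ge0 lt_rs eig_le.
have [P [T [P_unit T_trig M_eq T_eig]]] := mx_trigonalize M.
have sr_gt0 : 0 < s - r by rewrite subr_gt0.
have B_ge0 := mx_l1_ge0 T.
have den_gt0 : 0 < s - r + mx_l1 T by rewrite (lt_le_trans sr_gt0) // lerDl.
set delta := (s - r) / (s - r + mx_l1 T).
have delta_gt0 : 0 < delta by rewrite divr_gt0.
have delta_le1 : delta <= 1 by rewrite ler_pdivrMr // mul1r lerDl.
have rho_le : r + delta * mx_l1 T <= s.
  rewrite addrC -lerBrDr mulrAC ler_pdivrMr //.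
  by apply: ler_wpM2l; rewrite ?lerDr ltW.
exists (mx_l1 (invmx P) * mx_l1 P / delta ^+ m).
  by rewrite divr_ge0 ?mulr_ge0 ?mx_l1_ge0 ?exprn_ge0 ?ltW.
move=> n i j; rewrite M_eq exp_conj_invmx //.
have s_ge0 : 0 <= s := le_trans r_ge0 (ltW lt_rs).
have Tn_le k l : `|(T ^+ n) k l| <= s ^+ n / delta ^+ m.
  have T_diag t : `|T t t| <= r := eig_le _ (T_eig t).
  apply: le_trans (trig_exp_bound T_trig r_ge0 T_diag delta_gt0 delta_le1 n k l) _.
  apply: ler_wpM2r; first by rewrite invr_ge0 exprn_ge0 // ltW.
  by apply: lerXn2r; rewrite // nnegrE addr_ge0 // mulr_ge0 // ltW.
apply: le_trans (norm_mulmx3_le (invmx P) P _ Tn_le i j) _.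
  by rewrite divr_ge0 ?exprn_ge0 // ltW.
by rewrite le_eqVlt; apply/orP; left; apply/eqP; ring.
Qed.

Lemma mx_exp_bound_sqrt m (M : 'M[C]_m) (r : C) : 0 <= r -> r < 1 ->
  (forall a, eigenvalue M a -> `|a| <= r) ->
  exists2 K, 0 <= K & exists N, forall n, (N <= n)%N ->
    forall i j, `|(M ^+ n) i j| <= K * sqrtC r ^+ n.
Proof.
move=> r_ge0 r_lt1 eig_le; have [r0 | r_neq0] := eqVneq r 0.
  exists 0 => //; exists m => n le_mn i j.
  have M_nil : M ^+ m = 0.
    by apply: mx_exp_eq0 => a /eig_le; rewrite r0 normr_le0 => /eqP.
  by rewrite -(subnK le_mn) exprD M_nil mulr0 mxE normr0 mul0r.
have s_gt0 : 0 < sqrtC r by rewrite sqrtC_gt0 lt_def r_neq0.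
have s_lt1 : sqrtC r < 1 by rewrite -sqrtC1 ltr_sqrtC ?nnegrE ?ler01.
have lt_r_sqrt : r < sqrtC r.
  by rewrite -[X in X < _]sqrtCK expr2 -[X in _ < X]mulr1 ltr_pM2l.
have [K K_ge0 MK] := mx_exp_bound r_ge0 lt_r_sqrt eig_le.
by exists K => //; exists 0%N => n _; apply: MK.
Qed.

End SpectralBound.

Lemma bernoulli_ineq (R : numDomainType) (h : R) n :
  0 <= h -> 1 + n%:R * h <= (1 + h) ^+ n.
Proof.
move=> h_ge0; elim: n => [|n IHn]; first by rewrite mul0r addr0 expr0.
rewrite exprS; apply: le_trans (_ : (1 + h) * (1 + n%:R * h) <= _).
  rewrite -subr_ge0 (_ : _ - _ = n%:R * h * h); first by rewrite !mulr_ge0.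
  by rewrite -natr1; ring.
by apply: ler_wpM2l; rewrite // addr_ge0.
Qed.

Lemma exprn_eventually_le (R : archiNumFieldType) (s eps : R) :
  0 <= s -> s < 1 -> 0 < eps -> exists N, forall n, (N <= n)%N -> s ^+ n <= eps.
Proof.
move=> s_ge0 s_lt1 eps_gt0; have [-> | s_neq0] := eqVneq s 0.
  by exists 1%N => -[|n] // _; rewrite expr0n ltW.
have s_gt0 : 0 < s by rewrite lt_def s_neq0.
set h := s^-1 - 1.
have h_gt0 : 0 < h by rewrite subr_gt0 invf_gt1.
have bound_ge0 : 0 <= (eps * h)^-1 by rewrite invr_ge0 ltW // mulr_gt0.
exists (Num.Def.archi_bound (eps * h)^-1) => n le_n.
have lt_n : (eps * h)^-1 < n%:R.
  by apply: lt_le_trans (archi_boundP bound_ge0) _; rewrite ler_nat.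
have -> : s ^+ n = ((1 + h) ^+ n)^-1 by rewrite /h addrC subrK exprVn invrK.
rewrite -div1r ler_pdivrMr; last exact: exprn_gt0 (addr_gt0 ltr01 h_gt0).
apply: le_trans (_ : eps * (1 + n%:R * h) <= _); last first.
  by apply: ler_wpM2l; rewrite ?bernoulli_ineq // ltW.
have one_lt : 1 < eps * h * n%:R by rewrite -ltr_pdivrMl ?mulr_gt0 // mulr1.
rewrite mulrDr mulr1; apply: ler_wpDl; first exact: ltW.
by rewrite mulrCA mulrC; apply: ltW.
Qed.

Lemma mul_exprn_eventually_le (R : archiNumFieldType) (c s eps : R) :
  0 <= c -> 0 <= s -> s < 1 -> 0 < eps ->
  exists N, forall n, (N <= n)%N -> c * s ^+ n <= eps.
Proof.
move=> c_ge0 s_ge0 s_lt1 eps_gt0; have c1_gt0 : 0 < c + 1 by rewrite ltr_wpDl.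
have [N small] := exprn_eventually_le s_ge0 s_lt1 (divr_gt0 eps_gt0 c1_gt0).
exists N => n /small; rewrite ler_pdivlMr // mulrC; apply: le_trans.
by apply: ler_wpM2r; rewrite ?exprn_ge0 // lerDl.
Qed.

Definition fixed_proj D (Lam : 'M[algC]_D) : 'M[algC]_(D * D) :=
  vecm 1%:M *m adjm (vecm Lam).

Definition transfer_rest p D (A : 'I_p -> 'M[algC]_D) (Lam : 'M[algC]_D) :=
  transfer A - fixed_proj Lam.

Definition unvecm D (u : 'cV[algC]_(D * D)) : 'M[algC]_D :=
  \matrix_(i, j) u (mxvec_index j i) 0.

Lemma unvecmK D : cancel (@unvecm D) (@vecm D).
Proof.
move=> u; apply/matrixP => k l; rewrite (ord1 l).
by case/mxvec_indexP: k => a b; rewrite vecmE mxE.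
Qed.

Section TransferSplitting.
Variables (p D : nat) (A : 'I_p -> 'M[algC]_D) (Lam : 'M[algC]_D).
Hypotheses (channel1 : channel A 1%:M = 1%:M) (channel_adjLam : channel_adj A Lam = Lam).
Hypothesis trLam : \tr Lam = 1.

Local Notation P := (fixed_proj Lam).
Local Notation E := (transfer A).
Local Notation R := (transfer_rest A Lam).

Lemma adjm_vecm_Lam_I : adjm (vecm Lam) *m vecm 1%:M = 1%:M.
Proof.
by rewrite adjm_mul_braket braket_vecm mulmx1 mxtrace_tr mxtrace_conjm trLam conjC1.
Qed.

Lemma fixed_proj_idem : P *m P = P.
Proof. by rewrite mulmxA -[_ *m adjm _ *m _]mulmxA adjm_vecm_Lam_I mulmx1. Qed.

Lemma transfer_fixed_proj : E *m P = P.
Proof. by rewrite mulmxA transfer_vecm channel1. Qed.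

Lemma fixed_proj_transfer : P *m E = P.
Proof. by rewrite -mulmxA adjm_vecm_transfer channel_adjLam. Qed.

Lemma transfer_rest_fixed_proj : R *m P = 0.
Proof. by rewrite mulmxBl transfer_fixed_proj fixed_proj_idem subrr. Qed.

Lemma fixed_proj_transfer_rest : P *m R = 0.
Proof. by rewrite mulmxBr fixed_proj_transfer fixed_proj_idem subrr. Qed.

Lemma transfer_exp_split n : E ^+ n.+1 = P + R ^+ n.+1.
Proof.
have E_split : E = R + P by rewrite subrK.
have EP : E * P = P := transfer_fixed_proj.
have PR : P * R = 0 := fixed_proj_transfer_rest.
elim: n => [|n IHn]; first by rewrite !expr1 addrC.
rewrite exprS IHn mulrDr EP; congr (_ + _).
by rewrite [in LHS]E_split mulrDl -exprS [in P * _]exprS mulrA PR mul0r addr0.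
Qed.

Lemma mps_inner_split n X Y : (0 < n)%N ->
  mps_inner A X Y n =
  braket (vecm Lam) (kron (conjm X) Y *m vecm 1%:M) +
  \tr (R ^+ n *m kron (conjm X) Y).
Proof.
case: n => // n _; rewrite mps_inner_transfer transfer_exp_split mulmxDl mxtraceD.
by rewrite mxtrace_rank1.
Qed.

Variable lam2 : algC.
Hypothesis lam2_ge0 : 0 <= lam2.
Hypothesis eigenvalue_le_lam2 : forall mu, eigenvalue E mu -> mu != 1 -> `|mu| <= lam2.
Hypothesis channel_adj_fixed : forall Y, channel_adj A Y = Y -> exists c, Y = c *: Lam.

(* An eigenvector of [R] is annihilated by [P], hence is an eigenvector of [E];
   for the eigenvalue 1 it would be a multiple of <<Lam|, which [P] does not annihilate. *)
Lemma eigenvalue_transfer_rest a : eigenvalue R a -> `|a| <= lam2.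
Proof.
move=> /eigenvalueP [v vR v_neq0]; have [-> | a_neq0] := eqVneq a 0.
  by rewrite normr0.
have vP : v *m P = 0.
  have /eqP := congr1 (mulmx^~ P) vR.
  rewrite -mulmxA transfer_rest_fixed_proj mulmx0 -scalemxAl eq_sym scaler_eq0.
  by rewrite (negbTE a_neq0) => /eqP.
have vE : v *m E = a *: v by rewrite -[E](subrK P) mulmxDr vR vP addr0.
have [a1 | a_neq1] := eqVneq a 1; last first.
  by apply: eigenvalue_le_lam2 a_neq1; apply/eigenvalueP; exists v.
set Y := unvecm (adjm v).
have v_def : v = adjm (vecm Y) by rewrite unvecmK adjmK.
have /channel_adj_fixed [c Y_def] : channel_adj A Y = Y.
  apply: vecm_inj; apply: (can_inj (@adjmK _ _)).
  by rewrite -adjm_vecm_transfer -v_def vE a1 scale1r.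
have vPv : v *m P = v.
  by rewrite v_def Y_def vecmZ adjmZ -scalemxAl /fixed_proj mulmxA adjm_vecm_Lam_I mul1mx.
by move: v_neq0; rewrite -vPv vP eqxx.
Qed.

End TransferSplitting.

Section Frobenius.
Variable D : nat.
Implicit Types X Y : 'M[algC]_D.

Lemma frob_sqr X : frob X ^+ 2 = \sum_i \sum_j `|X i j| ^+ 2.
Proof. exact: sqrtCK. Qed.

Lemma frob_ge0 X : 0 <= frob X.
Proof.
by rewrite sqrtC_ge0 sumr_ge0 // => i _; rewrite sumr_ge0 // => j _; rewrite exprn_ge0.
Qed.

Lemma entry_le_frob X a b : `|X a b| <= frob X.
Proof.
have sqr_ge0 i j : 0 <= `|X i j| ^+ 2 by rewrite exprn_ge0.
rewrite -(@ler_pXn2r _ 2) ?nnegrE ?frob_ge0 // frob_sqr (bigD1 a) //= (bigD1 b) //=.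
by rewrite -addrA lerDl addr_ge0 ?sumr_ge0 // => i _; rewrite sumr_ge0.
Qed.

Lemma norm_kron_conjm_le X Y k l : `|kron (conjm X) Y k l| <= frob X * frob Y.
Proof.
case/mxvec_indexP: k => a b; case/mxvec_indexP: l => c d.
by rewrite kronE mxE normrM norm_conjC ler_pM ?entry_le_frob.
Qed.

Lemma braket_diag_kron_ge (Lam : 'M[algC]_D) (mu : algC) X :
  is_diag_mx Lam -> 0 <= mu -> (forall a, mu <= Lam a a) ->
  mu * frob X ^+ 2 <= braket (vecm Lam) (kron (conjm X) X *m vecm 1%:M).
Proof.
move=> /is_diag_mxP Lam_diag mu_ge0 mu_le.
rewrite mul_kron_vecm braket_vecm frob_sqr mulr_sumr; apply: ler_sum => a _.
rewrite mxE [X in _ <= X](bigD1 a) //= [X in _ <= _ + X]big1 ?addr0 => [|b ne_ba]; last first.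
  by rewrite !mxE Lam_diag ?conjC0 ?mul0r // eq_sym.
rewrite !mxE geC0_conj ?(le_trans mu_ge0) //; apply: ler_pM => //.
  by rewrite sumr_ge0 // => j _; rewrite exprn_ge0.
rewrite mulmx1 le_eqVlt; apply/orP; left; apply/eqP.
by apply: eq_bigr => j _; rewrite !mxE normCK.
Qed.

End Frobenius.

Lemma finite_pos_lower_bound (R : numFieldType) (I : finType) (F : I -> R) :
  (forall i, 0 < F i) -> exists2 mu, 0 < mu & forall i, mu <= F i.
Proof.
move=> F_gt0; have invF_ge0 i : 0 <= (F i)^-1 by rewrite invr_ge0 ltW.
have S_gt0 : 0 < 1 + \sum_i (F i)^-1 by rewrite ltr_wpDr ?sumr_ge0.
exists (1 + \sum_i (F i)^-1)^-1; first by rewrite invr_gt0.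
move=> i; rewrite -[F i]invrK lef_pV2 ?posrE ?invr_gt0 //.
by rewrite (bigD1 i) //= addrCA lerDl addr_ge0 ?sumr_ge0.
Qed.

Lemma frob_sqr_le_of_split D (Lam X : 'M[algC]_D) (mu eps err : algC) :
  is_diag_mx Lam -> 0 < mu -> (forall a, mu <= Lam a a) ->
  eps <= mu / 2 -> `|err| <= eps * frob X ^+ 2 ->
  braket (vecm Lam) (kron (conjm X) X *m vecm 1%:M) + err = 1 ->
  frob X ^+ 2 <= 2 / mu.
Proof.
move=> Lam_diag mu_gt0 mu_le eps_le err_le; set L := braket _ _ => L_err.
have f_ge0 : 0 <= frob X ^+ 2 by rewrite exprn_ge0 ?frob_ge0.
have L_ge := braket_diag_kron_ge X Lam_diag (ltW mu_gt0) mu_le.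
have L_le : L <= 1 + mu / 2 * frob X ^+ 2.
  have L_ge0 : 0 <= L := le_trans (mulr_ge0 (ltW mu_gt0) f_ge0) L_ge.
  rewrite -[L]ger0_norm //.
  rewrite (_ : L = 1 - err); last by rewrite -L_err addrK.
  apply: le_trans (ler_normB _ _) _; rewrite normr1 lerD2l.
  by apply: le_trans err_le _; apply: ler_wpM2r.
rewrite -[2 / mu]mulr1 -invf_div ler_pdivlMl ?divr_gt0 //.
rewrite -(lerD2r (mu / 2 * frob X ^+ 2)) -mulrDl -splitr.
exact: le_trans L_ge L_le.
Qed.

Lemma lambda2_ge0 p D (A : 'I_p -> 'M[algC]_D) (lam2 : algC) :
  is_lambda2 A lam2 -> 0 <= lam2.
Proof. by case=> -[mu _ [_ <-]]. Qed.

Lemma lambda2_lt1 p D (A : 'I_p -> 'M[algC]_D) (Lam : 'M[algC]_D) (lam2 : algC) :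
  injective_canonical A Lam -> is_lambda2 A lam2 -> lam2 < 1.
Proof.
case=> -[_ radius_le1] [peripheral _] _ _ _ [[mu E_mu [mu_neq1 <-]] _].
rewrite lt_def radius_le1 // andbT; apply: contra_neq mu_neq1 => /esym.
exact: peripheral.
Qed.

Section Estimates.
Variables (p D : nat) (A : 'I_p -> 'M[algC]_D) (Lam : 'M[algC]_D).
Hypotheses (channel1 : channel A 1%:M = 1%:M) (channel_adjLam : channel_adj A Lam = Lam).
Hypotheses (trLam : \tr Lam = 1) (Lam_diag : is_diag_mx Lam).
Variables (mu c : algC) (n : nat).
Hypotheses (mu_gt0 : 0 < mu) (mu_le : forall a, mu <= Lam a a) (n_gt0 : (0 < n)%N).
Hypotheses (c_ge0 : 0 <= c) (rest_le : forall i j, `|(transfer_rest A Lam ^+ n) i j| <= c).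
Hypothesis c_small : c *+ (D * D * (D * D)) <= mu / 2.

Local Notation err Z1 Z2 := (\tr (transfer_rest A Lam ^+ n *m kron (conjm Z1) Z2)).

Lemma rest_term_le Z1 Z2 :
  `|err Z1 Z2| <= c *+ (D * D * (D * D)) * (frob Z1 * frob Z2).
Proof.
rewrite mulrnAl; apply: norm_mxtrace_mul_le rest_le (norm_kron_conjm_le Z1 Z2) => //.
by rewrite mulr_ge0 ?frob_ge0.
Qed.

Lemma frob_le_of_normalized Z : mps_inner A Z Z n = 1 -> frob Z <= sqrtC (2 / mu).
Proof.
rewrite (mps_inner_split channel1 channel_adjLam trLam) // => split1.
have := frob_sqr_le_of_split Lam_diag mu_gt0 mu_le c_small (rest_term_le Z Z) split1.
have two_mu_ge0 : 0 <= 2 / mu by rewrite divr_ge0 // ltW.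
by rewrite -{1}[2 / mu]sqrtCK ler_pXn2r // nnegrE ?frob_ge0 ?sqrtC_ge0.
Qed.

Lemma braket_le_of_orthogonal Z1 Z2 :
  mps_inner A Z1 Z2 n = 0 -> frob Z1 <= sqrtC (2 / mu) -> frob Z2 <= sqrtC (2 / mu) ->
  `|braket (vecm Lam) (kron (conjm Z1) Z2 *m vecm 1%:M)| <= c *+ (D * D * (D * D)) * (2 / mu).
Proof.
rewrite (mps_inner_split channel1 channel_adjLam trLam) // => /eqP.
rewrite addr_eq0 => /eqP braket_eq f1 f2.
rewrite braket_eq normrN; apply: le_trans (rest_term_le Z1 Z2) _.
apply: ler_wpM2l; first by rewrite mulrn_wge0.
by rewrite -[2 / mu]sqrtCK expr2 ler_pM ?frob_ge0.
Qed.

End Estimates.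

Theorem lemma7 (p D : nat) (A : 'I_p -> 'M[algC]_D) (Lam : 'M[algC]_D) (lam2 : algC) :
  injective_canonical A Lam ->
  is_lambda2 A lam2 ->
  exists (C : algC) (N : nat),
    forall (n : nat) (X Y : 'M[algC]_D),
      (N <= n)%N ->
      mps_inner A X X n = 1 -> mps_inner A Y Y n = 1 -> mps_inner A X Y n = 0 ->
      [/\ frob X <= C, frob Y <= C,
          `|braket (vecm Lam) (kron (conjm X) Y *m vecm 1%:M)| <= C * sqrtC lam2 ^+ n
        & `|braket (vecm Lam) (kron (conjm Y) X *m vecm 1%:M)| <= C * sqrtC lam2 ^+ n].
Proof.
move=> inj l2; have l2_ge0 := lambda2_ge0 l2; have l2_lt1 := lambda2_lt1 inj l2.
case: inj => _ _ [chan1 _] [chanLam chan_fix] [Lam_diag Lam_pos trLam].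
have eig_rest := eigenvalue_transfer_rest chan1 trLam l2_ge0 l2.2 chan_fix.
have [K K_ge0 [N1 rest_le]] := mx_exp_bound_sqrt l2_ge0 l2_lt1 eig_rest.
have [mu mu_gt0 mu_le] := finite_pos_lower_bound Lam_pos.
set s := sqrtC lam2; set W := (D * D * (D * D))%N.
have s_ge0 : 0 <= s by rewrite sqrtC_ge0.
have s_lt1 : s < 1 by rewrite -sqrtC1 ltr_sqrtC ?nnegrE ?ler01.
have mu2_gt0 : 0 < mu / 2 by rewrite divr_gt0.
have [N2 small] := mul_exprn_eventually_le (mulrn_wge0 W K_ge0) s_ge0 s_lt1 mu2_gt0.
exists (sqrtC (2 / mu) + K *+ W * (2 / mu)), (maxn (maxn N1 N2) 1) => n X Y.
rewrite !geq_max => /andP[/andP[le_N1n le_N2n] n_gt0] nX nY oXY.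
have c_ge0 : 0 <= K * s ^+ n by rewrite mulr_ge0 ?exprn_ge0.
have c_small : K * s ^+ n *+ W <= mu / 2 by rewrite -mulrnAl small.
have rest_n := rest_le n le_N1n.
have frob_le := frob_le_of_normalized chan1 chanLam trLam Lam_diag mu_gt0 mu_le
  n_gt0 c_ge0 rest_n c_small.
have braket_le := braket_le_of_orthogonal (mu := mu) chan1 chanLam trLam n_gt0 c_ge0 rest_n.
have [fX fY] := (frob_le X nX, frob_le Y nY).
have oYX : mps_inner A Y X n = 0 by rewrite mps_inner_conj oXY conjC0.
have two_mu_ge0 : 0 <= 2 / mu by rewrite divr_ge0 // ltW.
have sqrt_le : sqrtC (2 / mu) <= sqrtC (2 / mu) + K *+ W * (2 / mu).
  by rewrite lerDl mulr_ge0 ?mulrn_wge0.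
have rate_le : K * s ^+ n *+ W * (2 / mu) <= (sqrtC (2 / mu) + K *+ W * (2 / mu)) * s ^+ n.
  rewrite [X in _ <= X]mulrDl -mulrnAl mulrAC.
  by apply: ler_wpDl; rewrite // mulr_ge0 ?sqrtC_ge0 ?exprn_ge0.
split; [exact: le_trans fX sqrt_le | exact: le_trans fY sqrt_le | |].
- exact: le_trans (braket_le _ _ oXY fX fY) rate_le.
- exact: le_trans (braket_le _ _ oYX fY fX) rate_le.
Qed.
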